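(* Let $\eta\in(0,1]$ be rational, $\eta=p/q$ with $p,q>0$ integers, and let $\omega(x)=\eta^{-1}$ for $x\in[0,\eta]$ and $\omega(x)=0$ for $x>\eta$. Let $f\in C^3(\mathbb{R}_+)$ satisfy $f'(\rho)\le0$ and $f(\rho)\ge0$ for all $\rho\ge0$, and suppose there is a constant $M\ge0$ with $\sup_{\rho\ge0}\big(\sum_{k=0}^3|f^{(k)}(\rho)|\big)+1\le M$. Then for every $\rho^*>0$, every $b\in\mathbb{R}$ with $|b|<\rho^*$ and every integer $k>0$, the function $$\rho(t,x)=\rho^*+b\sin\big(2kq\pi(x-f(\rho^* )t)\big),\quad t\ge0,\ x\in\mathbb{R},$$ is a solution of $$\frac{\partial\rho}{\partial t}(t,x)+\frac{\partial}{\partial x}\big(\rho(t,x)v(t,x)\big)=0,\quad v(t,x)=f\Big(\int_x^{x+\eta}\omega(s-x)\rho(t,s)\,ds\Big),\quad \rho(t,x+1)=\rho(t,x),\quad t\ge0,\ x\in\mathbb{R}.$$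
   Context: $\mathbb{R}_+=[0,+\infty)$. *)

From Stdlib Require Import Reals.
From Coquelicot Require Import Coquelicot.
Open Scope R_scope.

(* g' r is the derivative of g at r, relative to the domain D
   (one-sided at boundary points of D; two-sided when D = fun _ => True). *)
Definition has_deriv_within (D : R -> Prop) (g : R -> R) (g' r : R) : Prop :=
  filterlim (fun h => (g (r + h) - g r) / h)
    (within (fun h => h <> 0 /\ D (r + h)) (locally 0)) (locally g').

Definition Rplus_dom : R -> Prop := fun y => 0 <= y.

Definition cont_Rp (g : R -> R) : Prop :=
  forall r, 0 <= r -> filterlim g (within Rplus_dom (locally r)) (locally (g r)).

Definition C3_Rp (f f1 f2 f3 : R -> R) : Prop :=
  (forall r, 0 <= r -> has_deriv_within Rplus_dom f (f1 r) r) /\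
  (forall r, 0 <= r -> has_deriv_within Rplus_dom f1 (f2 r) r) /\
  (forall r, 0 <= r -> has_deriv_within Rplus_dom f2 (f3 r) r) /\
  cont_Rp f3.

(* the kernel omega(x) = 1/eta on [0,eta], 0 for x > eta (used only for x >= 0) *)
Definition omega (eta x : R) : R := if Rle_dec x eta then / eta else 0.

Definition velocity (eta : R) (f : R -> R) (rho : R -> R -> R) (t x : R) : R :=
  f (RInt (fun s => omega eta (s - x) * rho t s) x (x + eta)).

Definition is_solution (eta : R) (f : R -> R) (rho : R -> R -> R) : Prop :=
  forall t x, 0 <= t ->
    ex_RInt (fun s => omega eta (s - x) * rho t s) x (x + eta) /\
    rho t (x + 1) = rho t x /\
    exists rt fx : R,
      has_deriv_within Rplus_dom (fun tau => rho tau x) rt t /\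
      has_deriv_within (fun _ => True)
        (fun y => rho t y * velocity eta f rho t y) fx x /\
      rt + fx = 0.

(* The nonlocal average of [rho* + b sin (K (x - c t))] over [x, x + eta] is
   taken over a whole number of periods, because the wave number
   [K = 2 k q pi] satisfies [K eta = 2 k p pi]; so it equals [rho*] and the
   velocity is the constant [f rho*].  With [c = f rho*] the equation reduces
   to the linear transport equation [rho_t + c rho_x = 0], which the
   travelling wave solves.  None of the regularity, sign or bound assumptions
   on [f] is needed. *)
From Stdlib Require Import Reals Lra FunctionalExtensionality.
From Coquelicot Require Import Coquelicot.
Open Scope R_scope.

Lemma has_deriv_within_is_derive (D : R -> Prop) (g : R -> R) (l r : R) :
  is_derive g r l -> has_deriv_within D g l r.
Proof.
  intros Hg. apply is_derive_Reals in Hg.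
  apply filterlim_locally. intros eps.
  destruct (Hg eps (cond_pos eps)) as [delta Hdelta].
  exists delta. intros h Hh [Hh0 _].
  change (Rabs ((g (r + h) - g r) / h - l) < eps).
  apply Hdelta; [exact Hh0|].
  change (Rabs (h - 0) < delta) in Hh. rewrite Rminus_0_r in Hh. exact Hh.
Qed.

Lemma omega_weighted_is_RInt (eta y I : R) (g : R -> R) :
  0 < eta -> is_RInt g y (y + eta) I ->
  is_RInt (fun s => omega eta (s - y) * g s) y (y + eta) (/ eta * I).
Proof.
  intros Heta Hg.
  apply is_RInt_ext with (f := fun s => / eta * g s).
  - intros s Hs. rewrite Rmin_left in Hs by lra. rewrite Rmax_right in Hs by lra.
    unfold omega. destruct (Rle_dec (s - y) eta); [reflexivity | lra].
  - exact (is_RInt_scal _ _ _ _ _ Hg).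
Qed.

Lemma shift_by_periods (K L x d : R) (n : nat) :
  K * L = 2 * INR n * PI -> K * (x + L - d) = K * (x - d) + 2 * INR n * PI.
Proof. intros HL. rewrite <- HL. ring. Qed.

Section TravellingWave.

Variables (a b K c : R) (n : nat).
Hypothesis HK : K <> 0.

Let wave (t x : R) : R := a + b * sin (K * (x - c * t)).

Lemma wave_is_RInt_periods (L t y : R) :
  K * L = 2 * INR n * PI -> is_RInt (wave t) y (y + L) (a * L).
Proof.
  intros HL.
  set (F := fun s => a * s - b * cos (K * (s - c * t)) / K).
  replace (a * L) with (minus (F (y + L)) (F y)).
  - apply (@is_RInt_derive R_CompleteNormedModule F).
    + intros s _. unfold F, wave. auto_derive; [auto|]. unfold Rminus. field. exact HK.
    + intros s _. apply (@ex_derive_continuous R_AbsRing R_NormedModule).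
      unfold wave. auto_derive. auto.
  - unfold F, minus, plus, opp; simpl.
    rewrite (shift_by_periods K L y (c * t) n HL), cos_period. field. exact HK.
Qed.

Lemma wave_velocity (eta : R) (f : R -> R) (t y : R) :
  0 < eta -> K * eta = 2 * INR n * PI -> velocity eta f wave t y = f a.
Proof.
  intros Heta HL. unfold velocity.
  rewrite (is_RInt_unique _ _ _ _
    (omega_weighted_is_RInt eta y _ (wave t) Heta (wave_is_RInt_periods eta t y HL))).
  f_equal. field. lra.
Qed.

Lemma wave_is_solution (eta : R) (f : R -> R) (m : nat) :
  0 < eta -> K * eta = 2 * INR n * PI -> K = 2 * INR m * PI -> c = f a ->
  is_solution eta f wave.
Proof.
  intros Heta HKeta HKm Hc t x _. split; [|split].
  - exists (/ eta * (a * eta)). apply (omega_weighted_is_RInt _ _ _ _ Heta).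
    exact (wave_is_RInt_periods eta t x HKeta).
  - unfold wave. rewrite (shift_by_periods K 1 x (c * t) m) by (rewrite HKm; ring).
    rewrite sin_period. reflexivity.
  - exists (- b * cos (K * (x - c * t)) * K * c), (b * cos (K * (x - c * t)) * K * c).
    split; [|split; [|ring]].
    + apply has_deriv_within_is_derive. unfold wave. auto_derive; [auto | unfold Rminus; ring].
    + replace (fun y => wave t y * velocity eta f wave t y) with (fun y => wave t y * c)
        by (apply functional_extensionality; intros y; rewrite wave_velocity; congruence).
      apply has_deriv_within_is_derive. unfold wave. auto_derive; [auto | unfold Rminus; ring].
Qed.

End TravellingWave.

Theorem proposition3p1 (p q : nat) (hp : (0 < p)%nat) (hq : (0 < q)%nat)
  (heta : INR p / INR q <= 1)
  (f f1 f2 f3 : R -> R) (hf : C3_Rp f f1 f2 f3)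
  (hf1 : forall r, 0 <= r -> f1 r <= 0)
  (hf0 : forall r, 0 <= r -> 0 <= f r)
  (M : R) (hM0 : 0 <= M)
  (hM : forall r, 0 <= r -> Rabs (f r) + Rabs (f1 r) + Rabs (f2 r) + Rabs (f3 r) + 1 <= M)
  (rhostar b : R) (hrho : 0 < rhostar) (hb : Rabs b < rhostar)
  (k : nat) (hk : (0 < k)%nat) :
  is_solution (INR p / INR q) f
    (fun t x => rhostar + b * sin (2 * INR k * INR q * PI * (x - f rhostar * t))).
Proof.
  assert (Hp : 0 < INR p) by (apply lt_0_INR; exact hp).
  assert (Hq : 0 < INR q) by (apply lt_0_INR; exact hq).
  assert (Hk : 0 < INR k) by (apply lt_0_INR; exact hk).
  assert (HK : 0 < 2 * INR k * INR q * PI).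
  { pose proof PI_RGT_0.
    apply Rmult_lt_0_compat; [apply Rmult_lt_0_compat; [apply Rmult_lt_0_compat|]|]; lra. }
  apply (wave_is_solution _ _ _ _ (k * p) (Rgt_not_eq _ _ HK) _ _ (k * q)).
  - apply Rdiv_lt_0_compat; assumption.
  - rewrite mult_INR. field. lra.
  - rewrite mult_INR. ring.
  - reflexivity.
Qed.
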